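(* Assume the standing setting. Let $\epsilon>0$, fix a coarse index $j\in\mathbb Z$, and let $m$ be an integer with $1\le m\le r$. If $|u^0_i-u^0_{i+1}|\le \epsilon/3^{M}$ for all $i\in\mathbb Z$, then $$|v_m-u_m|\le \tfrac32 h+\tfrac34|d_1+d_2|+\big(\min[m,r-m]+3\big)\epsilon .$$
   Context: Standing setting. Let $F:\mathbb R\to\mathbb R$ be continuously differentiable. For a spatial step $\eta>0$, a time step $\tau>0$ and an initial sequence $(z^0_i)_{i\in\mathbb Z}$ of reals, the EFC (Euler forward in time, centered in space) scheme produces $(z^n_i)_{i\in\mathbb Z,\,n\in\mathbb N}$ by $z^{n+1}_i=z^n_i-F'(z^n_i)\frac{\tau}{2\eta}\,(z^n_{i+1}-z^n_{i-1})$. It satisfies the CFL condition if $|F'(z^n_i)|\,\tau/\eta\le 1$ for all $i\in\mathbb Z$, $n\in\mathbb N$. Fix $a\in\mathbb R$, $h>0$, $\Delta t>0$, an integer $N>1$ and an even integer $r\ge 2$; put $k=h/r$, $dt=\Delta t/r$, $M=Nr$. Let $u_0:\mathbb R\to\mathbb R$. The coarse solution $(w^n_j)$ is the EFC scheme with $\eta=h$, $\tau=\Delta t$, $w^0_j=u_0(a+jh)$; the fine solution $(u^n_i)$ is the EFC scheme with $\eta=k$, $\tau=dt$, $u^0_i=u_0(a+ik)$ (so $w^0_j=u^0_{jr}$). Both are assumed to satisfy the CFL condition. Coarse nodes: $x_j=a+jh$. Interpolant: for a fixed coarse index $j$, set $p_1=x_j$, $p_2=x_{j+1}$, $d_1=w^N_j$,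 $d_2=w^N_{j+1}$, let $q$ be the cubic with $q(0)=p_1$, $q(1)=p_2$, $q'(0)=d_1$, $q'(1)=d_2$, and let $v(t)=q'(t)=(6p_1-6p_2+3d_1+3d_2)t^2+(-6p_1+6p_2-4d_1-2d_2)t+d_1$ for $t\in[0,1]$. For $0\le m\le r$ put $v_m=v(m/r)$ and $u_m=u^M_{jr+m}$ (the fine solution at time step $M$ at the fine node $x_j+mk$). *)

From Stdlib Require Import Reals ZArith Lra Lia.
From Coquelicot Require Import Coquelicot.
Open Scope R_scope.

Definition cont_diff1 (F : R -> R) : Prop :=
  (forall x, ex_derive F x) /\ (forall x, continuous (Derive F) x).

Fixpoint efc (F : R -> R) (eta tau : R) (z0 : Z -> R) (n : nat) : Z -> R :=
  match n with
  | O => z0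
  | S n' => fun i =>
      let z := efc F eta tau z0 n' in
      z i - Derive F (z i) * (tau / (2 * eta)) * (z (i + 1)%Z - z (i - 1)%Z)
  end.

Definition CFL (F : R -> R) (eta tau : R) (z0 : Z -> R) : Prop :=
  forall (n : nat) (i : Z), Rabs (Derive F (efc F eta tau z0 n i)) * tau / eta <= 1.

(* v(t) = q'(t) for the cubic Hermite q with q(0)=p1, q(1)=p2, q'(0)=d1, q'(1)=d2 *)
Definition vH (p1 p2 d1 d2 t : R) : R :=
  (6*p1 - 6*p2 + 3*d1 + 3*d2) * t ^ 2 + (- 6*p1 + 6*p2 - 4*d1 - 2*d2) * t + d1.

(* Under the CFL condition the coefficient F'(z) tau/(2 eta) of an EFC step has modulus at
   most 1/2, so one step moves every value by at most the current largest jump d between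
   neighbours and the new jumps are at most 3d.  Hence after n steps the jumps are at most
   3^n d0 and the values have drifted by at most (3^n - 1) d0 / 2 from the initial data.
   With initial fine jumps eps/3^M (coarse jumps r eps/3^M) both the fine solution at time M
   and the coarse solution at time N stay within eps/2 of the initial data, and the initial
   data varies by at most eps/3 over one coarse cell.  So d1 and d2 are within 4 eps/3 of
   u_m, and the derivative of the Hermite cubic, rewritten in terms of d1 - u_m, d2 - u_m,
   d1 + d2 and h, gives the bound with 8 eps/3 in place of (min[m, r-m] + 3) eps. *)
From Stdlib Require Import Reals ZArith Lra Lia.
From Coquelicot Require Import Coquelicot.
Open Scope R_scope.

Lemma Rabs_sub_le x y : Rabs (x - y) <= Rabs x + Rabs y.
Proof. unfold Rminus; rewrite <- (Rabs_Ropp y); apply Rabs_triang. Qed.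

Lemma Rabs_sub_le_via x a b y e1 e2 e3 :
  Rabs (x - a) <= e1 -> Rabs (a - b) <= e2 -> Rabs (y - b) <= e3 ->
  Rabs (x - y) <= e1 + e2 + e3.
Proof.
  intros H1 H2 H3.
  replace (x - y) with ((x - a) + (a - b) - (y - b)) by ring.
  pose proof (Rabs_sub_le ((x - a) + (a - b)) (y - b)).
  pose proof (Rabs_triang (x - a) (a - b)).
  lra.
Qed.

Section EFC_stability.

Variables (F : R -> R) (eta tau : R) (z0 : Z -> R).
Hypotheses (Heta : 0 < eta) (Htau : 0 < tau) (HCFL : CFL F eta tau z0).

Local Notation z := (efc F eta tau z0).

Lemma efc_coef_le_half n i : Rabs (Derive F (z n i) * (tau / (2 * eta))) <= / 2.
Proof.
  pose proof (HCFL n i) as H.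
  rewrite Rabs_mult, (Rabs_right (tau / (2 * eta)))
    by (apply Rle_ge, Rlt_le, Rdiv_lt_0_compat; lra).
  replace (Rabs (Derive F (z n i)) * (tau / (2 * eta)))
    with (Rabs (Derive F (z n i)) * tau / eta / 2) by (field; lra).
  lra.
Qed.

Section Step.

Variables (n : nat) (d : R).
Hypothesis Hjump : forall i, Rabs (z n i - z n (i + 1)%Z) <= d.

Lemma efc_step_le i : Rabs (z (S n) i - z n i) <= d.
Proof.
  simpl.
  set (c := Derive F (z n i) * (tau / (2 * eta))).
  assert (Hc : Rabs c <= / 2) by apply efc_coef_le_half.
  assert (Hwide : Rabs (z n (i + 1)%Z - z n (i - 1)%Z) <= 2 * d).
  { pose proof (Hjump i) as H1. pose proof (Hjump (i - 1)%Z) as H2.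
    replace (i - 1 + 1)%Z with i in H2 by ring.
    replace (z n (i + 1)%Z - z n (i - 1)%Z)
      with (- (z n i - z n (i + 1)%Z) - (z n (i - 1)%Z - z n i)) by ring.
    eapply Rle_trans; [apply Rabs_triang|].
    rewrite !Rabs_Ropp; lra. }
  replace (z n i - c * (z n (i + 1)%Z - z n (i - 1)%Z) - z n i)
    with (- (c * (z n (i + 1)%Z - z n (i - 1)%Z))) by ring.
  rewrite Rabs_Ropp, Rabs_mult.
  pose proof (Rabs_pos c). pose proof (Rabs_pos (z n (i + 1)%Z - z n (i - 1)%Z)).
  nra.
Qed.

Lemma efc_jump_succ_le i : Rabs (z (S n) i - z (S n) (i + 1)%Z) <= 3 * d.
Proof.
  replace (z (S n) i - z (S n) (i + 1)%Z) with
    ((z (S n) i - z n i) + (z n i - z n (i + 1)%Z) - (z (S n) (i + 1)%Z - z n (i + 1)%Z))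
    by ring.
  pose proof (efc_step_le i). pose proof (Hjump i). pose proof (efc_step_le (i + 1)%Z).
  pose proof (Rabs_sub_le (z (S n) i - z n i + (z n i - z n (i + 1)%Z))
                (z (S n) (i + 1)%Z - z n (i + 1)%Z)).
  pose proof (Rabs_triang (z (S n) i - z n i) (z n i - z n (i + 1)%Z)).
  lra.
Qed.

End Step.

Variable d0 : R.
Hypothesis Hjump0 : forall i, Rabs (z0 i - z0 (i + 1)%Z) <= d0.

Lemma efc_jump_le n i : Rabs (z n i - z n (i + 1)%Z) <= d0 * 3 ^ n.
Proof.
  revert i; induction n as [|n IH]; intro i.
  - simpl; rewrite Rmult_1_r; apply Hjump0.
  - replace (d0 * 3 ^ S n) with (3 * (d0 * 3 ^ n)) by (simpl; ring).
    now apply efc_jump_succ_le.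
Qed.

Lemma efc_drift_le n i : Rabs (z n i - z0 i) <= d0 * (3 ^ n - 1) / 2.
Proof.
  revert i; induction n as [|n IH]; intro i.
  - simpl; rewrite Rminus_diag, Rabs_R0; lra.
  - replace (z (S n) i - z0 i) with ((z (S n) i - z n i) + (z n i - z0 i)) by ring.
    pose proof (Rabs_triang (z (S n) i - z n i) (z n i - z0 i)).
    pose proof (efc_step_le n (d0 * 3 ^ n) (efc_jump_le n) i). pose proof (IH i).
    replace (d0 * (3 ^ S n - 1) / 2) with (d0 * 3 ^ n + d0 * (3 ^ n - 1) / 2)
      by (simpl; field).
    lra.
Qed.

End EFC_stability.

Lemma efc_drift_le_half F eta tau z0 n e :
  0 < eta -> 0 < tau -> CFL F eta tau z0 -> 0 <= e ->
  (forall i, Rabs (z0 i - z0 (i + 1)%Z) <= e / 3 ^ n) ->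
  forall i, Rabs (efc F eta tau z0 n i - z0 i) <= e / 2.
Proof.
  intros Heta Htau HCFL He Hjump i.
  eapply Rle_trans; [exact (efc_drift_le F eta tau z0 Heta Htau HCFL _ Hjump n i)|].
  assert (H3n : 0 < 3 ^ n) by (apply pow_lt; lra).
  replace (e / 3 ^ n * (3 ^ n - 1) / 2) with ((e - e / 3 ^ n) / 2) by (field; lra).
  assert (0 <= e / 3 ^ n) by (apply Rdiv_le_0_compat; lra).
  lra.
Qed.

Lemma Rabs_sub_shift_le (g : Z -> R) d :
  (forall i, Rabs (g i - g (i + 1)%Z) <= d) ->
  forall (p q : nat) i, (p <= q)%nat -> Rabs (g i - g (i + Z.of_nat p)%Z) <= INR q * d.
Proof.
  intros Hg p q i Hpq.
  assert (Hd : 0 <= d) by (pose proof (Hg 0%Z); pose proof (Rabs_pos (g 0%Z - g (0 + 1)%Z)); lra).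
  apply Rle_trans with (INR p * d); [|apply Rmult_le_compat_r, le_INR; assumption].
  clear q Hpq; induction p as [|p IH].
  - rewrite Z.add_0_r, Rminus_diag, Rabs_R0; simpl; lra.
  - rewrite Nat2Z.inj_succ, S_INR.
    replace (i + Z.succ (Z.of_nat p))%Z with (i + Z.of_nat p + 1)%Z by lia.
    replace (g i - g (i + Z.of_nat p + 1)%Z) with
      ((g i - g (i + Z.of_nat p)%Z) + (g (i + Z.of_nat p)%Z - g (i + Z.of_nat p + 1)%Z))
      by ring.
    pose proof (Rabs_triang (g i - g (i + Z.of_nat p)%Z)
                  (g (i + Z.of_nat p)%Z - g (i + Z.of_nat p + 1)%Z)).
    pose proof (Hg (i + Z.of_nat p)%Z).
    lra.
Qed.

Lemma INR_mul_le_pow X n : 2 <= X -> (1 <= n)%nat -> INR n * X <= X ^ n.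
Proof.
  intros HX; induction n as [|n IH]; intro Hn; [lia|].
  destruct (Nat.eq_dec n 0) as [->|Hn0]; [simpl; lra|].
  assert (H : INR n * X <= X ^ n) by (apply IH; lia).
  assert (Hn1 : 1 <= INR n) by (apply (le_INR 1); lia).
  assert (X * (INR n * X) <= X * X ^ n) by (apply Rmult_le_compat_l; lra).
  assert (X * 1 <= X * (INR n * (X - 1))) by (apply Rmult_le_compat_l; nra).
  rewrite S_INR; simpl; nra.
Qed.

Lemma INR_mul_div_pow_le X n e : 2 <= X -> (1 <= n)%nat -> 0 <= e ->
  INR n * (e / X ^ n) <= e / X.
Proof.
  intros HX Hn He.
  pose proof (INR_mul_le_pow X n HX Hn).
  assert (HXn : 0 < X ^ n) by (apply pow_lt; lra).
  replace (INR n * (e / X ^ n)) with (e / X * (INR n * X / X ^ n)) by (field; lra).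
  rewrite <- (Rmult_1_r (e / X)) at 2.
  apply Rmult_le_compat_l; [apply Rdiv_le_0_compat; lra|].
  apply (Rdiv_le_1 _ _ HXn); lra.
Qed.

Lemma hermite_weights_abs_sum_le t : 0 <= t <= 1 ->
  Rabs ((1 - t) * (1 - 3 * t)) + Rabs (t * (3 * t - 2)) + Rabs (6 * t * (1 - t)) <= 2.
Proof.
  intros Ht.
  rewrite (Rabs_right (6 * t * (1 - t))) by nra.
  pose proof (pow2_ge_0 (2 * t - 1)).
  destruct (Rcase_abs ((1 - t) * (1 - 3 * t))) as [H1|H1];
  destruct (Rcase_abs (t * (3 * t - 2))) as [H2|H2];
  try rewrite (Rabs_left _ H1); try rewrite (Rabs_right _ H1);
  try rewrite (Rabs_left _ H2); try rewrite (Rabs_right _ H2);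
  nra.
Qed.

Lemma vH_sub_le p1 h d1 d2 u t E : 0 <= h -> 0 <= t <= 1 ->
  Rabs (d1 - u) <= E -> Rabs (d2 - u) <= E ->
  Rabs (vH p1 (p1 + h) d1 d2 t - u) <= 3 / 2 * h + 3 / 4 * Rabs (d1 + d2) + 2 * E.
Proof.
  intros Hh Ht H1 H2.
  set (w1 := (1 - t) * (1 - 3 * t)); set (w2 := t * (3 * t - 2));
    set (w3 := 6 * t * (1 - t)).
  assert (Hmid : Rabs ((d1 + d2) / 2 - u) <= E).
  { replace ((d1 + d2) / 2 - u) with ((d1 - u) * / 2 + (d2 - u) * / 2) by field.
    pose proof (Rabs_triang ((d1 - u) * / 2) ((d2 - u) * / 2)).
    rewrite !Rabs_mult, (Rabs_right (/ 2)) in * by lra; lra. }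
  (* the weights w1, w2, w3 sum to 1, which lets u be subtracted inside the combination *)
  replace (vH p1 (p1 + h) d1 d2 t - u) with
    (w1 * (d1 - u) + w2 * (d2 - u) + w3 * ((d1 + d2) / 2 - u)
     - 3 * t * (1 - t) * (d1 + d2) + 6 * t * (1 - t) * h)
    by (unfold vH, w1, w2, w3; field).
  pose proof (hermite_weights_abs_sum_le t Ht) as Hw; fold w1 w2 w3 in Hw.
  assert (Hquarter : 0 <= t * (1 - t) <= 1 / 4) by (pose proof (pow2_ge_0 (2 * t - 1)); nra).
  pose proof (Rabs_triang (w1 * (d1 - u) + w2 * (d2 - u) + w3 * ((d1 + d2) / 2 - u)
                - 3 * t * (1 - t) * (d1 + d2)) (6 * t * (1 - t) * h)).
  pose proof (Rabs_sub_le (w1 * (d1 - u) + w2 * (d2 - u) + w3 * ((d1 + d2) / 2 - u))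
                (3 * t * (1 - t) * (d1 + d2))).
  pose proof (Rabs_triang (w1 * (d1 - u) + w2 * (d2 - u)) (w3 * ((d1 + d2) / 2 - u))).
  pose proof (Rabs_triang (w1 * (d1 - u)) (w2 * (d2 - u))).
  assert (HE : 0 <= E) by (pose proof (Rabs_pos (d1 - u)); lra).
  assert (B1 : Rabs (w1 * (d1 - u)) <= Rabs w1 * E)
    by (rewrite Rabs_mult; apply Rmult_le_compat_l; [apply Rabs_pos | exact H1]).
  assert (B2 : Rabs (w2 * (d2 - u)) <= Rabs w2 * E)
    by (rewrite Rabs_mult; apply Rmult_le_compat_l; [apply Rabs_pos | exact H2]).
  assert (B3 : Rabs (w3 * ((d1 + d2) / 2 - u)) <= Rabs w3 * E)
    by (rewrite Rabs_mult; apply Rmult_le_compat_l; [apply Rabs_pos | exact Hmid]).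
  assert (B4 : Rabs (3 * t * (1 - t) * (d1 + d2)) <= 3 / 4 * Rabs (d1 + d2)).
  { rewrite Rabs_mult, (Rabs_right (3 * t * (1 - t))) by nra.
    pose proof (Rabs_pos (d1 + d2)); nra. }
  assert (B5 : Rabs (6 * t * (1 - t) * h) <= 3 / 2 * h) by (rewrite Rabs_right; nra).
  nra.
Qed.

Theorem theorem1
  (F : R -> R) (HF : cont_diff1 F)
  (a h Dt : R) (Hh : 0 < h) (HDt : 0 < Dt)
  (N r : nat) (HN : (1 < N)%nat) (Hr2 : (2 <= r)%nat) (Hreven : Nat.Even r)
  (u0 : R -> R)
  (HCFLc : CFL F h Dt (fun j => u0 (a + IZR j * h)))
  (HCFLf : CFL F (h / INR r) (Dt / INR r) (fun i => u0 (a + IZR i * (h / INR r))))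
  (eps : R) (Heps : 0 < eps) (j : Z) (m : nat) (Hm1 : (1 <= m)%nat) (Hmr : (m <= r)%nat)
  (Hu0 : forall i : Z,
      Rabs (u0 (a + IZR i * (h / INR r)) - u0 (a + IZR (i + 1) * (h / INR r)))
        <= eps / 3 ^ (N * r)) :
  let k := h / INR r in
  let dt := Dt / INR r in
  let M := (N * r)%nat in
  let w := efc F h Dt (fun j => u0 (a + IZR j * h)) in
  let u := efc F k dt (fun i => u0 (a + IZR i * k)) in
  let p1 := a + IZR j * h in
  let p2 := a + IZR (j + 1) * h in
  let d1 := w N j in
  let d2 := w N (j + 1)%Z in
  let v_m := vH p1 p2 d1 d2 (INR m / INR r) in
  let u_m := u M (j * Z.of_nat r + Z.of_nat m)%Z in
  Rabs (v_m - u_m) <= 3 / 2 * h + 3 / 4 * Rabs (d1 + d2)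
                      + (INR (Nat.min m (r - m)) + 3) * eps.
Proof.
  intros k dt M w u p1 p2 d1 d2 v_m u_m.
  assert (Hr : 0 < INR r) by (apply lt_0_INR; lia).
  assert (Hk : 0 < k) by (apply Rdiv_lt_0_compat; lra).
  assert (Hdt : 0 < dt) by (apply Rdiv_lt_0_compat; lra).
  set (g := fun i => u0 (a + IZR i * k)).
  set (df := eps / 3 ^ M).
  assert (Hg : forall i, Rabs (g i - g (i + 1)%Z) <= df) by exact Hu0.
  assert (H3N : 3 <= 3 ^ N) by (pose proof (Rle_pow 3 1 N ltac:(lra) ltac:(lia)); simpl in *; lra).
  assert (Hcell : INR r * df <= eps / 3 ^ N)
    by (unfold df, M; rewrite pow_mult; apply INR_mul_div_pow_le; lra || lia).
  assert (Hcell3 : eps / 3 ^ N <= eps / 3)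
    by (apply Rmult_le_compat_l; [lra | apply Rinv_le_contravar; lra]).
  assert (Hnear : forall i p, (p <= r)%nat -> Rabs (g i - g (i + Z.of_nat p)%Z) <= eps / 3)
    by (intros i p Hp; pose proof (Rabs_sub_shift_le g df Hg p r i Hp); lra).
  assert (Hfine : forall i, Rabs (u M i - g i) <= eps / 2)
    by exact (efc_drift_le_half F k dt g M eps Hk Hdt HCFLf (Rlt_le _ _ Heps) Hg).
  assert (Hw0 : forall j', u0 (a + IZR j' * h) = g (j' * Z.of_nat r)%Z).
  { intro j'. unfold g, k. rewrite mult_IZR, <- INR_IZR_INZ. f_equal. field. lra. }
  assert (Hcoarse : forall j', Rabs (w N j' - g (j' * Z.of_nat r)%Z) <= eps / 2).
  { assert (Hcjump : forall j', Rabs (u0 (a + IZR j' * h) - u0 (a + IZR (j' + 1) * h))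
                                 <= eps / 3 ^ N).
    { intro j'. rewrite !Hw0.
      replace ((j' + 1) * Z.of_nat r)%Z with (j' * Z.of_nat r + Z.of_nat r)%Z by ring.
      pose proof (Rabs_sub_shift_le g df Hg r r (j' * Z.of_nat r)%Z (le_n r)). lra. }
    intro j'. rewrite <- Hw0.
    exact (efc_drift_le_half F h Dt _ N eps Hh HDt HCFLc (Rlt_le _ _ Heps) Hcjump j'). }
  assert (E1 : Rabs (d1 - u_m) <= 4 / 3 * eps).
  { eapply Rle_trans;
      [exact (Rabs_sub_le_via _ _ _ _ _ _ _ (Hcoarse j) (Hnear _ m Hmr) (Hfine _)) | lra]. }
  assert (E2 : Rabs (d2 - u_m) <= 4 / 3 * eps).
  { pose proof (Hnear (j * Z.of_nat r + Z.of_nat m)%Z (r - m)%nat ltac:(lia)) as Hn.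
    replace (j * Z.of_nat r + Z.of_nat m + Z.of_nat (r - m))%Z
      with ((j + 1) * Z.of_nat r)%Z in Hn by (rewrite Nat2Z.inj_sub by lia; ring).
    rewrite Rabs_minus_sym in Hn.
    eapply Rle_trans;
      [exact (Rabs_sub_le_via _ _ _ _ _ _ _ (Hcoarse (j + 1)%Z) Hn (Hfine _)) | lra]. }
  assert (Ht : 0 <= INR m / INR r <= 1).
  { pose proof (le_INR m r Hmr). pose proof (pos_INR m).
    split; [apply Rdiv_le_0_compat | apply (Rdiv_le_1 _ _ Hr)]; lra. }
  assert (Hp2 : p2 = p1 + h) by (unfold p1, p2; rewrite plus_IZR; ring).
  unfold v_m; rewrite Hp2.
  pose proof (vH_sub_le p1 h d1 d2 u_m _ _ ltac:(lra) Ht E1 E2).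
  pose proof (pos_INR (Nat.min m (r - m))). nra.
Qed.
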